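(* Let $r\ge1$ and let $\ell\ge 2^r+1$ (with $\ell$ odd). There exists $m_0=m_0(r,\ell)$ such that for every $m\ge m_0$ the graph $H_{m,r}$ is $(C_\ell,r)$-Ramsey.
   Context: $H_{m,r}$ is the graph on pairwise disjoint vertex sets $V_1,\dots,V_{2^r+1}$, each of size $m$, whose edges are: a perfect matching between $V_{2i-1}$ and $V_{2i}$ for each $1\le i\le 2^{r-1}$, and all possible edges between $V_i$ and $V_j$ for every other pair $\{i,j\}$ of distinct indices (no edges inside any $V_i$). A graph $G$ is $(H,r)$-Ramsey if every colouring of its edges with $r$ colours contains a monochromatic copy of $H$. $C_\ell$ is the cycle of length $\ell$. *)

From mathcomp Require Import all_boot all_order.
Set Implicit Arguments. Unset Strict Implicit. Unset Printing Implicit Defensive.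

(* A simple graph on a finite type is given by an adjacency relation,
   assumed symmetric and irreflexive where needed (H_{m,r} below is). *)

(* Vertices of H_{m,r}: pairs (i, a) meaning vertex a of part V_{i+1},
   i < 2^r + 1, a < m (0-indexed parts). *)
Definition Hvert (m r : nat) : finType := ('I_(2 ^ r).+1 * 'I_m)%type.

(* Parts i, j (0-indexed) are matched iff they are V_{2k-1}, V_{2k}
   (1-indexed) for some 1 <= k <= 2^(r-1), i.e. i = 2k', j = 2k'+1
   (or vice versa) with k' < 2^(r-1), i.e. i/2 = j/2 and both < 2^r. *)
Definition matched_parts (r i j : nat) : bool :=
  [&& i != j, i./2 == j./2, i < 2 ^ r & j < 2 ^ r].

(* Edge relation of H_{m,r}; the perfect matching between matched parts
   is taken to be the identity matching a <-> a (any choice gives an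
   isomorphic graph). *)
Definition Hadj (m r : nat) : rel (Hvert m r) :=
  fun x y =>
    (x.1 != y.1) &&
    (if matched_parts r x.1 y.1 then x.2 == y.2 else true).

Definition cycle_Ramsey (T : finType) (G : rel T) (l r : nat) : Prop :=
  forall c : T -> T -> 'I_r,
    (forall x y, G x y -> c x y = c y x) ->
    exists k : 'I_r, exists v : 'I_l -> T,
      injective v /\
      forall i : 'I_l,
        G (v i) (v (ordS i)) /\ c (v i) (v (ordS i)) = k.

(* Iterating a bipartite Ramsey lemma over all pairs of blocks of parts (a
   block is a matched pair of parts, or the last part) gives, once m is large,
   a set S b of l indices for every block b such that the colour of an edge
   (y, a)(z, a') between parts of different blocks depends only on y and z when
   a and a' range over S (block y) and S (block z).  Choosing one index of S b
   for every block b spans a copy of K_(2^r+1).  A graph without odd cycles is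
   bipartite, and r bipartite colour classes cannot cover the edges of a
   complete graph on more than 2^r vertices, so this copy contains a
   monochromatic odd cycle, of some length t <= l.  One of its edges yz joins
   parts of different blocks, and all edges between {y} x S (block y) and
   {z} x S (block z) have the colour of yz; replacing yz by a zigzag through
   fresh vertices of these two sets gives a monochromatic cycle of length l. *)

From mathcomp Require Import all_boot all_order zify.
Set Implicit Arguments. Unset Strict Implicit. Unset Printing Implicit Defensive.

Lemma pigeonhole_fiber (T C : finType) (B : {set T}) (g : T -> C) (k0 : C) :
  exists k, #|B| <= #|C| * #|[set x in B | g x == k]|.
Proof.
pose F k := #|[set x in B | g x == k]|.
have [k _ Fk_max] := @arg_maxnP C k0 xpredT F isT.
exists k; rewrite -sum_nat_const.
have -> : #|B| = \sum_(j : C) F j.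
  rewrite -sum1_card (partition_big g xpredT) //=.
  apply: eq_bigr => j _; rewrite sum1dep_card /F.
  by apply: eq_card => x; rewrite !inE.
by apply: leq_sum => j _; apply: Fk_max.
Qed.

Definition homogeneous (T C : Type) (chi : T -> T -> C) (A B : {pred T}) :=
  forall a a' b b', a \in A -> a' \in A -> b \in B -> b' \in B ->
    chi a b = chi a' b'.

Definition bipartite_ramsey_bound (c N : nat) := N + N * c + N * c ^ (N * c).

Lemma bipartite_ramsey (T C : finType) (N : nat) (chi : T -> T -> C)
    (A B : {set T}) :
  let M := bipartite_ramsey_bound #|C| N in M <= #|A| -> M <= #|B| ->
  exists A' B' : {set T}, [/\ A' \subset A, B' \subset B, N <= #|A'|,
    N <= #|B'| & homogeneous chi A' B'].
Proof.
rewrite /bipartite_ramsey_bound; case: N => [|N] /= leA leB.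
  by exists set0, set0; rewrite !sub0set; split => // a a' b b'; rewrite inE.
have [a1 _] : exists a1, a1 \in A by apply/card_gt0P; lia.
have c_gt0 : 0 < #|C| by apply/card_gt0P; exists (chi a1 a1).
have /card_geqP[s [s_uniq s_size sA]] : N.+1 * #|C| <= #|A|.
  by rewrite (leq_trans _ leA) // -addnA (leq_trans _ (leq_addl _ _)) // leq_addr.
pose profile b := map_tuple (chi^~ b) (in_tuple s).
have [F leBF] := pigeonhole_fiber B profile (profile a1).
set B' := [set b in B | profile b == F] in leBF.
have leB' : N.+1 <= #|B'|.
  rewrite card_tuple s_size in leBF.
  rewrite -(@leq_pmul2l (#|C| ^ (N.+1 * #|C|))) ?expn_gt0 ?c_gt0 //.
  by apply: leq_trans _ leBF; rewrite mulnC (leq_trans _ leB) // leq_addl.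
have [b0 b0B'] : exists b0, b0 \in B' by apply/card_gt0P; apply: leq_trans _ leB'.
have [k leAk] := pigeonhole_fiber [set a in s] (chi^~ b0) (chi a1 a1).
set A' := [set a in [set a in s] | chi a b0 == k] in leAk.
have leA' : N.+1 <= #|A'|.
  by rewrite -(leq_pmul2l c_gt0) mulnC -s_size -(card_uniqP s_uniq) -[#|s|]cardsE.
have chi_k a b : a \in A' -> b \in B' -> chi a b = k.
  rewrite !inE => /andP[a_s /eqP <-] /andP[_ /eqP profile_b].
  move: b0B'; rewrite inE => /andP[_ /eqP profile_b0].
  have /(congr1 val)/eq_in_map/(_ a a_s) : profile b = profile b0 by rewrite profile_b.
  by [].
exists A', B'; split => //.
- by apply/subsetP => a; rewrite !inE => /andP[/sA].
- by apply/subsetP => b; rewrite !inE => /andP[].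
- by move=> a a' b b' aA a'A bB b'B; rewrite !chi_k.
Qed.

Lemma bipartite_ramsey_pairs (I C : finType) (ps : seq (I * I)) (N : nat) :
  exists M, forall (T : finType) (chi : I -> I -> T -> T -> C)
    (S0 : I -> {set T}), (forall i, M <= #|S0 i|) ->
  exists S : I -> {set T}, [/\ forall i, S i \subset S0 i,
    forall i, N <= #|S i| &
    forall i j, (i, j) \in ps -> i != j -> homogeneous (chi i j) (S i) (S j)].
Proof.
elim: ps => [|[i j] ps [M IHps]].
  by exists N => T chi S0 leS0; exists S0; split.
exists (bipartite_ramsey_bound #|C| M) => T chi S0 leS0.
have leM x : M <= #|S0 x|.
  by apply: leq_trans _ (leS0 x); rewrite /bipartite_ramsey_bound -addnA leq_addr.
have [<- | neq_ij] := eqVneq i j.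
  have [S [sub_S leS homS]] := IHps T chi S0 leM.
  exists S; split => // i' j'; rewrite inE => /predU1P[[-> ->] /eqP // | ].
  exact: homS.
have [A' [B' [sA sB leA leB homAB]]] := bipartite_ramsey (chi i j) (leS0 i) (leS0 j).
pose S1 x := if x == i then A' else if x == j then B' else S0 x.
have S1_i : S1 i = A' by rewrite /S1 eqxx.
have S1_j : S1 j = B' by rewrite /S1 eq_sym (negbTE neq_ij) eqxx.
have sub_S1 x : S1 x \subset S0 x.
  by rewrite /S1; case: eqP => [-> //|_]; case: eqP => [-> //|_].
have leS1 x : M <= #|S1 x|.
  by rewrite /S1; case: eqP => _; last case: eqP => _; rewrite ?leA ?leB ?leM.
have [S [sub_S leS homS]] := IHps T chi S1 leS1.
exists S; split => // [x | i' j'].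
  exact: subset_trans (sub_S x) (sub_S1 x).
rewrite inE => /predU1P[[-> ->] _ | ]; last exact: homS.
have /subsetP sSi := sub_S i; have /subsetP sSj := sub_S j.
rewrite S1_i in sSi; rewrite S1_j in sSj.
by move=> a a' b b' /sSi aA /sSi a'A /sSj bB /sSj b'B; apply: homAB.
Qed.

Lemma ramsey_homogeneous_family (I C : finType) (N : nat) :
  exists M, forall (T : finType) (chi : I -> I -> T -> T -> C), M <= #|T| ->
  exists S : I -> {set T}, (forall i, N <= #|S i|) /\
    forall i j, i != j -> homogeneous (chi i j) (S i) (S j).
Proof.
have [M HM] := bipartite_ramsey_pairs C (enum [set: I * I]) N.
exists M => T chi leT.
have [|S [_ leS homS]] := HM T chi (fun=> setT) => [i|]; first by rewrite cardsT.
by exists S; split => // i j; apply: homS; rewrite mem_enum inE.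
Qed.

Definition closed_walk (V : Type) (E : rel V) (t : nat) (w : nat -> V) :=
  w t = w 0 /\ forall i, i < t -> E (w i) (w i.+1).

Section ClosedWalks.

Variables (V : eqType) (E : rel V).

Lemma closed_walk_subloop t w i j :
  closed_walk E t w -> i < j <= t -> w i = w j ->
  closed_walk E (j - i) (fun k => w (i + k)).
Proof.
move=> [_ Ew] /andP[lt_ij le_jt] wij; split; first by rewrite subnKC ?addn0 // ltnW.
by move=> k lt_k; rewrite addnS; apply: Ew; lia.
Qed.

Lemma closed_walk_cut t w i j :
  closed_walk E t w -> i < j <= t -> w i = w j ->
  closed_walk E (t - (j - i)) (fun k => if k <= i then w k else w (k + (j - i))).
Proof.
move=> [wt Ew] /andP[lt_ij le_jt] wij; split.
  rewrite leq0n; case: ifP => [le_ti | _]; last by rewrite subnK ?wt //; lia.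
  have -> : t - (j - i) = i by lia.
  by rewrite wij -wt; congr w; lia.
move=> k lt_k; case: (ltngtP k i) => [lt_ki | lt_ik | eq_ki].
- by apply: Ew; lia.
- by rewrite addSn; apply: Ew; lia.
- by rewrite eq_ki wij addSn subnKC ?(ltnW lt_ij) //; apply: Ew; lia.
Qed.

Lemma odd_closed_walk_simple t w :
  odd t -> closed_walk E t w ->
  exists t' w', [/\ odd t', closed_walk E t' w' & {in gtn t' &, injective w'}].
Proof.
elim/ltn_ind: t w => t IH w odd_t walk_w.
have [/existsP[[i lt_it] /existsP[[j lt_jt] /andP[/= lt_ij /eqP wij]]] | simple] :=
  boolP [exists i : 'I_t, exists j : 'I_t, (i < j) && (w i == w j)].
  have ij_jt : i < j <= t by rewrite lt_ij ltnW.
  have [odd_ji | even_ji] := boolP (odd (j - i)).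
    by apply: IH (closed_walk_subloop walk_w ij_jt wij) => //; lia.
  apply: IH (closed_walk_cut walk_w ij_jt wij); first lia.
  by rewrite oddB ?odd_t ?(negbTE even_ji) //; lia.
exists t, w; split => // i j lt_it lt_jt wij; apply/eqP; apply: contraNT simple => neq_ij.
wlog lt_ij : i j lt_it lt_jt wij {neq_ij} / i < j.
  move=> hw; case: (ltngtP i j) neq_ij => // lt _; first exact: hw lt_it lt_jt wij lt.
  exact: hw lt_jt lt_it (esym wij) lt.
apply/existsP; exists (Ordinal lt_it); apply/existsP; exists (Ordinal lt_jt).
by rewrite /= lt_ij wij eqxx.
Qed.

End ClosedWalks.

(* The bipartite double cover of E: there is an odd closed walk through x iff
   (x, false) and (x, true) are connected in it. *)
Definition parity_cover (V : Type) (E : rel V) : rel (V * bool) :=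
  fun x y => E x.1 y.1 && (y.2 == ~~ x.2).

Definition parity_side (V : finType) (E : rel V) (x : V) : bool :=
  connect (parity_cover E) (root E x, false) (x, true).

Section ParityCover.

Variables (V : finType) (E : rel V).
Local Notation cover := (parity_cover E).

Lemma parity_cover_last p a :
  path cover a p -> (last a p).2 = a.2 (+) odd (size p).
Proof.
elim: p a => [|y p IHp] a /=; first by rewrite addbF.
by case/andP=> /andP[_ /eqP y2] /IHp->; rewrite y2 addbN addNb.
Qed.

Lemma connect_parity_cover p a b :
  path E a p -> connect cover (a, b) (last a p, b (+) odd (size p)).
Proof.
elim: p a b => [|y p IHp] a b /=; first by rewrite addbF connect0.
case/andP=> Eay /(IHp _ (~~ b)); rewrite addNb -addbN; apply: connect_trans.
by apply: connect1; rewrite /parity_cover /= Eay eqxx.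
Qed.

Lemma parity_cover_odd_closed_walk x :
  connect cover (x, false) (x, true) -> exists t w, odd t /\ closed_walk E t w.
Proof.
case/connectP=> p cover_p last_p.
have := parity_cover_last cover_p; rewrite -last_p /= => odd_p.
exists (size p), (fun i => (nth (x, false) ((x, false) :: p) i).1).
split; first by rewrite -odd_p.
split; first by rewrite /= -last_nth -last_p.
by move=> i lt_ip; case/andP: (pathP (x, false) cover_p i lt_ip).
Qed.

Hypothesis symE : symmetric E.
Hypothesis no_odd : forall x, ~~ connect cover (x, false) (x, true).

Let cover_sym : connect_sym cover.
Proof.
apply: sym_connect_sym => a b; rewrite /parity_cover symE.
by case: a.2; case: b.2.
Qed.

Lemma connect_root_parity_side x :
  connect cover (root E x, false) (x, parity_side E x).
Proof.
have /connectP[p Ep x_last] : connect E (root E x) x.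
  by rewrite (sym_connect_sym symE) connect_root.
rewrite /parity_side.
have [reach_t | /negbTE unreach_t] := boolP (connect cover _ (x, true)).
  by rewrite reach_t.
have := connect_parity_cover false Ep; rewrite -x_last.
by case: odd; rewrite /= ?unreach_t.
Qed.

Lemma parity_side_proper x y : E x y -> parity_side E x != parity_side E y.
Proof.
move=> Exy; have root_xy : root E x = root E y.
  by apply/(rootP (sym_connect_sym symE))/connect1.
apply/negP => /eqP same_side.
have := connect_root_parity_side y; set b := parity_side E y => reach_y.
have reach_y' : connect cover (root E y, false) (y, ~~ b).
  rewrite -root_xy; apply: connect_trans (connect_root_parity_side x) _.
  by apply: connect1; rewrite /parity_cover /= Exy same_side eqxx.
case/negP: (no_odd y); case: b reach_y reach_y' => reach_y reach_y'.
  by apply: connect_trans reach_y; rewrite cover_sym.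
by apply: connect_trans reach_y'; rewrite cover_sym.
Qed.

End ParityCover.

Lemma monochromatic_odd_cycle (V : finType) (r : nat) (E : 'I_r -> rel V) :
  (forall k, symmetric (E k)) -> (forall k, irreflexive (E k)) ->
  (forall x y, x != y -> exists k, E k x y) -> 2 ^ r < #|V| ->
  exists k t w,
    [/\ odd t, 2 < t, closed_walk (E k) t w & {in gtn t &, injective w}].
Proof.
move=> symE irrE covE card_V.
have [/existsP[k /existsP[x odd_x]] | /existsPn no_odd] :=
  boolP [exists k, exists x, connect (parity_cover (E k)) (x, false) (x, true)].
  have [t [w [odd_t walk_w]]] := parity_cover_odd_closed_walk odd_x.
  have [t' [w' [odd_t' walk_w' inj_w']]] := odd_closed_walk_simple odd_t walk_w.
  exists k, t', w'; split => //.
  case: t' odd_t' walk_w' {inj_w'} => [|[|[|t']]] // _ [w'1 /(_ 0 isT)].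
  by rewrite w'1 irrE.
have side_inj : injective (fun x => [ffun k => parity_side (E k) x]).
  move=> x y /ffunP same_sides; apply/eqP; apply: contraT => neq_xy.
  have [k Exy] := covE x y neq_xy.
  have /existsPn no_odd_k := no_odd k.
  have := parity_side_proper (symE k) no_odd_k Exy.
  by have := same_sides k; rewrite !ffunE => ->; rewrite eqxx.
by have := leq_card _ side_inj; rewrite card_ffun card_bool card_ord leqNgt card_V.
Qed.

Section Rotation.

Variables (V : Type) (E : rel V) (t : nat) (w : nat -> V).
Hypothesis walk_w : closed_walk E t w.

Lemma closed_walk_modS i : i < t -> w (i.+1 %% t) = w i.+1.
Proof.
case: walk_w => wt _ lt_it.
have [lt_i1t | ] := ltnP i.+1 t; first by rewrite modn_small.
move=> le_ti; have -> : i.+1 = t by lia.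
by rewrite modnn wt.
Qed.

Lemma closed_walk_ordS :
  {in gtn t &, injective w} ->
  exists v : 'I_t -> V, injective v /\ forall i, E (v i) (v (ordS i)).
Proof.
move=> inj_w; exists (fun i => w i); split.
  by move=> i j /inj_w eq_ij; apply: val_inj; apply: eq_ij; rewrite inE.
by move=> i; rewrite /= closed_walk_modS //; case: walk_w => _; apply.
Qed.

Lemma closed_walk_rot j :
  {in gtn t &, injective w} -> j < t ->
  exists w', [/\ closed_walk E t w', {in gtn t &, injective w'},
                 w' 0 = w j.+1 & w' t.-1 = w j].
Proof.
move=> inj_w lt_jt; have t_gt0 : 0 < t by apply: leq_ltn_trans lt_jt.
exists (fun i => w ((i + j.+1) %% t)); split.
- split=> [|i _]; first by rewrite modnDl.
  have -> : (i.+1 + j.+1) %% t = ((i + j.+1) %% t).+1 %% t.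
    by rewrite -[((i + j.+1) %% t).+1]addn1 modnDml addn1 addSn.
  rewrite closed_walk_modS ?ltn_mod //.
  by case: walk_w => _; apply; rewrite ltn_mod.
- move=> i k lt_it lt_kt /inj_w; rewrite !inE !ltn_mod => /(_ t_gt0 t_gt0) /eqP.
  by rewrite eqn_modDr !modn_small // => /eqP.
- by rewrite add0n closed_walk_modS.
- by rewrite addnS -addSn prednK // modnDl modn_small.
Qed.

End Rotation.

Lemma closed_walk_crossing (V : Type) (W : eqType) (g : V -> W) t (w : nat -> V) :
  (forall x y z, g x = g y -> g y = g z -> [\/ x = y, y = z | x = z]) ->
  2 < t -> {in gtn t &, injective w} -> exists2 j, j < t & g (w j) != g (w j.+1).
Proof.
move=> fibres2 t_gt2 inj_w.
have [/existsP[j cross] | /existsPn no_cross] :=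
  boolP [exists j : 'I_t, g (w j) != g (w j.+1)].
  by exists j.
have same j : j.+1 < t -> g (w j) = g (w j.+1).
  by move=> lt_jt; apply/eqP; apply: contraNT (no_cross (Ordinal (ltnW lt_jt))).
have inj k1 k2 : w k1 = w k2 -> k1 < 3 -> k2 < 3 -> k1 = k2.
  by move=> eq_w lt1 lt2; apply: inj_w eq_w; rewrite inE; apply: leq_trans t_gt2.
by case: (fibres2 _ _ _ (same 0 (ltnW t_gt2)) (same 1 t_gt2)) => /inj/(_ isT isT).
Qed.

Section Extension.

Variables (V : finType) (E : rel V) (X Y : {set V}) (t q : nat) (w : nat -> V).
Hypotheses (walk_w : closed_walk E t w) (inj_w : {in gtn t &, injective w}).
Hypotheses (t_gt0 : 0 < t) (w0X : w 0 \in X) (wtY : w t.-1 \in Y).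
Hypotheses (wX : {in gtn t, forall i, w i \in X -> i = 0}).
Hypotheses (wY : {in gtn t, forall i, w i \in Y -> i = t.-1}).
Hypotheses (disjXY : [disjoint X & Y]) (EXY : {in X & Y, forall x y, E x y && E y x}).
Hypotheses (ltqX : q < #|X|) (ltqY : q < #|Y|).

Let xs := take q (enum (X :\ w 0)).
Let ys := enum (Y :\ w t.-1).

Let size_xs : size xs = q.
Proof.
have := cardsD1 (w 0) X; rewrite w0X add1n => card_X.
by rewrite size_takel // -cardE; lia.
Qed.

Let size_ys : q <= size ys.
Proof. by have := cardsD1 (w t.-1) Y; rewrite wtY add1n -cardE; lia. Qed.

(* After w 0, ..., w t.-1 the walk zigzags through x_0, y_0, ..., x_(q-1),
   y_(q-1) with x_d in X :\ w 0 and y_d in Y :\ w t.-1; at index t + q.*2 the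
   default value of nth closes it at w 0. *)
Let ext i := if i < t then w i
  else if odd (i - t) then nth (w t.-1) ys (i - t)./2 else nth (w 0) xs (i - t)./2.

Let ext_side i : t <= i -> ext i \in (if odd (i - t) then Y else X).
Proof.
rewrite /ext ltnNge => -> /=; case: odd.
  by case: (ltnP (i - t)./2 (size ys)) => [/(mem_nth (w t.-1)) | /(nth_default _) ->];
     rewrite ?mem_enum ?inE // => /andP[].
case: (ltnP (i - t)./2 (size xs)) => [/(mem_nth (w 0)) | /(nth_default _) ->] //.
by move/mem_take; rewrite mem_enum inE => /andP[].
Qed.

Let ext_fresh i : t <= i -> i < t + q.*2 ->
  ext i \in (if odd (i - t) then Y :\ w t.-1 else X :\ w 0).
Proof.
move=> le_ti lt_i; have lt_half : (i - t)./2 < q by lia.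
rewrite /ext ltnNge le_ti /=; case: odd.
  by rewrite -mem_enum mem_nth //; apply: leq_trans size_ys.
by rewrite -mem_enum; apply: (mem_take (n0 := q)); rewrite mem_nth // size_xs.
Qed.

Let ext_new_fresh i k : t <= i -> i < t + q.*2 -> k < t -> ext i != ext k.
Proof.
move=> le_ti lt_i lt_kt; rewrite {2}/ext lt_kt.
have := ext_fresh le_ti lt_i; case: odd => /setD1P[neq_w side];
  apply: contraNneq neq_w => eq_w; rewrite eq_w in side *.
  by rewrite (wY lt_kt side).
by rewrite (wX lt_kt side).
Qed.

Let ext_same_odd i j : t <= i -> i < t + q.*2 -> t <= j -> j < t + q.*2 ->
  ext i = ext j -> odd (i - t) = odd (j - t).
Proof.
move=> le_ti lt_i le_tj lt_j eq_ij.
have := ext_fresh le_ti lt_i; have := ext_fresh le_tj lt_j; rewrite -eq_ij.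
case: (odd (i - t)); case: (odd (j - t)) => // /setD1P[_ in_j] /setD1P[_ in_i].
  by rewrite (disjointFr disjXY in_j) in in_i.
by rewrite (disjointFr disjXY in_i) in in_j.
Qed.

Let ext_uniq i j : t <= i -> i < t + q.*2 -> t <= j -> j < t + q.*2 ->
  ext i = ext j -> i = j.
Proof.
move=> le_ti lt_i le_tj lt_j eq_ext.
have same_odd := ext_same_odd le_ti lt_i le_tj lt_j eq_ext.
have [lt_i2 lt_j2] : (i - t)./2 < q /\ (j - t)./2 < q by split; lia.
have eq_half : (i - t)./2 = (j - t)./2.
  move: eq_ext; rewrite /ext !ltnNge le_ti le_tj /= -same_odd.
  case: odd => /eqP; rewrite nth_uniq ?take_uniq ?enum_uniq ?size_xs
    ?(leq_trans lt_i2 size_ys) ?(leq_trans lt_j2 size_ys) //; exact/eqP.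
by have := odd_double_half (i - t); rewrite same_odd eq_half odd_double_half; lia.
Qed.

Let ext_closed_walk : closed_walk E (t + q.*2) ext.
Proof.
split.
  by rewrite /ext t_gt0 ltnNge leq_addr /= addKn odd_double doubleK nth_default ?size_xs.
move=> i lt_i; case: (ltnP i.+1 t) => [lt_i1t | le_ti1].
  by case: walk_w => _ Ew; rewrite /ext lt_i1t (ltnW lt_i1t); apply: Ew (ltnW lt_i1t).
have [side_i side_i1] : ext i \in (if odd (i.+1 - t) then X else Y) /\
                        ext i.+1 \in (if odd (i.+1 - t) then Y else X).
  split; last exact: ext_side.
  have [lt_it | le_ti] := ltnP i t.
    have -> : i = t.-1 by lia.
    by rewrite /ext prednK // subnn leqnn.
  by rewrite subSn // oddS; case: odd (ext_side le_ti).
by case: odd side_i side_i1 => [xX yY | yY xX]; case/andP: (EXY xX yY).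
Qed.

Let ext_inj : {in gtn (t + q.*2) &, injective ext}.
Proof.
move=> i j; rewrite !inE => lt_i lt_j eq_ij.
have [lt_it | le_ti] := ltnP i t; have [lt_jt | le_tj] := ltnP j t.
- by apply: inj_w; rewrite ?inE //; move: eq_ij; rewrite /ext lt_it lt_jt.
- by move: (ext_new_fresh le_tj lt_j lt_it); rewrite eq_ij eqxx.
- by move: (ext_new_fresh le_ti lt_i lt_jt); rewrite eq_ij eqxx.
- exact: ext_uniq eq_ij.
Qed.

Lemma closed_walk_extend :
  exists w', closed_walk E (t + q.*2) w' /\ {in gtn (t + q.*2) &, injective w'}.
Proof. by exists ext. Qed.

End Extension.

Definition colour_class (T : Type) (C : eqType) (G : rel T) (c : T -> T -> C) (k : C) :
    rel T :=
  fun x y => G x y && (c x y == k).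

Section HGraph.

Variables m r : nat.
Local Notation part := 'I_(2 ^ r).+1.

Definition block (i : part) : part := inord i./2.

Lemma block_eq (i j : part) : (block i == block j) = (i./2 == j./2).
Proof.
have half_lt (k : part) : k./2 < (2 ^ r).+1 by have := ltn_ord k; lia.
by rewrite -val_eqE /= !inordK.
Qed.

Lemma block_fibres (x y z : part) :
  block x = block y -> block y = block z -> [\/ x = y, y = z | x = z].
Proof.
move=> /eqP + /eqP; rewrite !block_eq => /eqP hxy /eqP hyz.
have same (a b : part) : a./2 = b./2 -> odd a = odd b -> a = b.
  move=> eq_half eq_odd; apply: val_inj.
  by rewrite -[val a]odd_double_half -[val b]odd_double_half eq_half eq_odd.
have [/(same _ _ hxy) | neq_xy] := eqVneq (odd x) (odd y); first by constructor 1.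
have [/(same _ _ hyz) | neq_yz] := eqVneq (odd y) (odd z); first by constructor 2.
constructor 3; apply: same; first by rewrite hxy.
by move: neq_xy neq_yz; case: (odd x); case: (odd y); case: (odd z).
Qed.

Lemma Hadj_parts (x y : Hvert m r) :
  x.1 != y.1 -> (block x.1 = block y.1 -> x.2 = y.2) -> Hadj x y.
Proof.
rewrite /Hadj => -> same_block /=; case: ifP => // /and4P[_ eq_half _ _].
by apply/eqP/same_block/eqP; rewrite block_eq.
Qed.

Definition transversal (f : part -> 'I_m) (i : part) : Hvert m r := (i, f (block i)).

Lemma Hadj_blocks (x y : Hvert m r) : block x.1 != block y.1 -> Hadj x y.
Proof.
move=> neq_block; apply: Hadj_parts => [|/eqP]; last by rewrite (negbTE neq_block).
by apply: contraNneq neq_block => ->.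
Qed.

Lemma Hadj_transversal f i j : i != j -> Hadj (transversal f i) (transversal f j).
Proof. by move=> neq_ij; apply: Hadj_parts => //= ->. Qed.

Variable c : Hvert m r -> Hvert m r -> 'I_r.
Hypothesis c_sym : forall x y, Hadj x y -> c x y = c y x.

Lemma transversal_odd_cycle (f : part -> 'I_m) :
  exists k t (W : nat -> part), [/\ odd t, t <= (2 ^ r).+1,
    closed_walk (colour_class (@Hadj m r) c k) t (transversal f \o W),
    {in gtn t &, injective W} & block (W 0) != block (W t.-1)].
Proof.
pose u := transversal f.
pose E := colour_class (fun i j : part => i != j) (fun i j => c (u i) (u j)).
have [|||| k [t [w [odd_t t_gt2 walk_w inj_w]]]] := @monochromatic_odd_cycle _ r E.
- move=> k i j; rewrite /E /colour_class eq_sym; case: eqVneq => //= neq_ij.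
  by rewrite c_sym // Hadj_transversal // eq_sym.
- by move=> k i; rewrite /E /colour_class eqxx.
- by move=> i j neq_ij; exists (c (u i) (u j)); rewrite /E /colour_class neq_ij eqxx.
- by rewrite card_ord.
have [j lt_jt cross] := closed_walk_crossing block_fibres t_gt2 inj_w.
have [W [[Wt EW] inj_W W0 Wt1]] := closed_walk_rot walk_w inj_w lt_jt.
exists k, t, W; split => //.
- have := @leq_card _ _ (fun i : 'I_t => W i); rewrite !card_ord; apply.
  by move=> i i' /inj_W eq_i; apply: val_inj; apply: eq_i; rewrite inE.
- split => [|i lt_it]; first by rewrite /= Wt.
  have /andP[neq_W colour] := EW i lt_it.
  by rewrite /colour_class Hadj_transversal.
- by rewrite W0 Wt1 eq_sym.
Qed.

Variables (l : nat) (S : part -> {set 'I_m}) (f : part -> 'I_m).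
Hypotheses (S_big : forall b, l <= #|S b|) (f_S : forall b, f b \in S b).
(* Homogeneity of this colouring of pairs of indices means that the colour of
   (y, a)(z, a') does not depend on a in S (block y) and a' in S (block z). *)
Hypothesis S_hom : forall b b', b != b' ->
  homogeneous (fun a a' => [ffun yz : part * part => c (yz.1, a) (yz.2, a')])
    (S b) (S b').

Lemma c_homogeneous y z a a' b b' : block y != block z ->
  a \in S (block y) -> a' \in S (block y) -> b \in S (block z) -> b' \in S (block z) ->
  c (y, a) (z, b) = c (y, a') (z, b').
Proof.
move=> neq_block ha ha' hb hb'.
have /(congr1 (fun F : {ffun _ -> _} => F (y, z))) := S_hom neq_block ha ha' hb hb'.
by rewrite !ffunE.
Qed.

Lemma colour_class_blocks k y z : block y != block z ->
  c (transversal f z) (transversal f y) = k ->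
  {in [set (y, a) | a in S (block y)] & [set (z, b) | b in S (block z)],
    forall x x', colour_class (@Hadj m r) c k x x' && colour_class (@Hadj m r) c k x' x}.
Proof.
move=> cross colour_zy _ _ /imsetP[a ha ->] /imsetP[b hb ->].
have colour_ba : c (z, b) (y, a) = k.
  by rewrite (c_homogeneous _ hb (f_S _) ha (f_S _)) 1?eq_sym.
have adj : Hadj (y, a) (z, b) by apply: Hadj_blocks.
have adj' : Hadj (z, b) (y, a) by apply: Hadj_blocks; rewrite eq_sym.
by rewrite /colour_class (c_sym adj) colour_ba adj adj' eqxx.
Qed.

Lemma transversal_cycle_extend k t (W : nat -> part) :
  odd l -> t <= l -> odd t ->
  closed_walk (colour_class (@Hadj m r) c k) t (transversal f \o W) ->
  {in gtn t &, injective W} -> block (W 0) != block (W t.-1) ->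
  exists w, closed_walk (colour_class (@Hadj m r) c k) l w /\ {in gtn l &, injective w}.
Proof.
move=> odd_l le_tl odd_t walk_W inj_W cross.
have t_gt0 : 0 < t by case: t odd_t {le_tl walk_W inj_W cross}.
set y := W 0 in cross; set z := W t.-1 in cross.
pose u := transversal f.
pose X := [set (y, a) | a in S (block y)]; pose Y := [set (z, b) | b in S (block z)].
have card_side (i : part) (A : {set 'I_m}) : #|[set (i, a) | a in A]| = #|A|.
  by apply: card_imset => a b [].
have colour_zy : c (u z) (u y) = k.
  case: walk_W => /= Wt /(_ t.-1); rewrite prednK // => /(_ (leqnn t)) /andP[_ /eqP].
  by rewrite Wt.
have walk_side i : i < t -> (u (W i) \in X -> i = 0) /\ (u (W i) \in Y -> i = t.-1).
  move=> lt_it; split; case/imsetP => a _ [/inj_W eq_i _]; apply: eq_i; rewrite inE //.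
  by rewrite prednK.
have [q def_l] : exists q, l = t + q.*2.
  exists ((l - t)./2).
  by have := odd_double_half (l - t); rewrite oddB // odd_l odd_t; lia.
rewrite def_l; apply: (@closed_walk_extend _ _ X Y t q (u \o W) walk_W) => //.
- by move=> i j lt_i lt_j [eq_W _]; apply: inj_W eq_W.
- by apply: imset_f.
- by apply: imset_f.
- by move=> i; rewrite inE => /walk_side [].
- by move=> i; rewrite inE => /walk_side [].
- rewrite disjoints_subset; apply/subsetP => _ /imsetP[a _ ->]; rewrite inE.
  by apply/imsetP => -[b _ [eq_yz _]]; rewrite eq_yz eqxx in cross.
- exact: colour_class_blocks.
- by rewrite card_side; have := S_big (block y); lia.
- by rewrite card_side; have := S_big (block z); lia.
Qed.

End HGraph.

Theorem lemma3p6 (r l : nat) :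
  1 <= r -> (2 ^ r).+1 <= l -> odd l ->
  exists m0 : nat, forall m : nat, m0 <= m ->
    cycle_Ramsey (@Hadj m r) l r.
Proof.
move=> _ le_l odd_l.
pose part := 'I_(2 ^ r).+1.
have [M ramsey_M] := ramsey_homogeneous_family part {ffun part * part -> 'I_r} l.
exists M => m le_Mm c c_sym.
have := ramsey_M 'I_m (fun _ _ a b => [ffun yz => c (yz.1, a) (yz.2, b)]).
rewrite card_ord => /(_ le_Mm) [S [S_big S_hom]].
have /fin_all_exists[f f_S] : forall b : part, exists a, a \in S b.
  by move=> b; apply/card_gt0P; apply: leq_trans _ (S_big b); lia.
have [k [t [W [odd_t le_t walk_W inj_W cross]]]] := transversal_odd_cycle c_sym f.
have [w [walk_w inj_w]] := transversal_cycle_extend c_sym S_big f_S S_hom odd_l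
  (leq_trans le_t le_l) odd_t walk_W inj_W cross.
have [v [inj_v edges_v]] := closed_walk_ordS walk_w inj_w.
by exists k, v; split => // i; have /andP[adj /eqP colour] := edges_v i.
Qed.
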